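(* Let $A$ be an associative unital algebra and $(H,\pi,\psi)$ a left twisting datum for $A$. Let $A^H=\{a\in A: h\cdot a=\varepsilon(h)a\ \forall h\in H\}$ and $A^{co(H)}=\{a\in A: a_{(-1)}\otimes a_{(0)}=1\otimes a\}$. Then $A^H$ is a subalgebra which is a left $H$-comodule algebra (by restricting $\psi$) and $A^{co(H)}$ is a subalgebra which is a left $H$-module algebra (by restricting $\pi$). If moreover $ab=ba$ for all $a\in A^{co(H)}$ and $b\in A^H$, then the map $A^{co(H)}\blacktriangleright\!\!<A^H\to(A,\star)$, $a\blacktriangleright\!\!<b\mapsto ab$, is an algebra map.
   Context: Work over a field $k$; $H$ a bialgebra, $\Delta(h)=h_1\otimes h_2$. A left twisting datum $(H,\pi,\psi)$ for $A$: $A$ is a left $H$-module algebra ($\pi(h\otimes a)=h\cdot a$, $h\cdot(ab)=(h_1\cdot a)(h_2\cdot b)$, $h\cdot1=\varepsilon(h)1$) and a left $H$-comodule algebra ($\psi(a)=a_{(-1)}\otimes a_{(0)}$ an algebra map) with $(h\cdot a)_{(-1)}\otimes(h\cdot a)_{(0)}=a_{(-1)}\otimes h\cdot a_{(0)}$; the left twisted product is $a\star b=a_{(0)}(a_{(-1)}\cdot b)$. For a left $H$-module algebra $M$ and left $H$-comodule algebra $N$ (coaction $n\mapsto n_{(-1)}\otimes n_{(0)}$), the generalized smash product $M\blacktriangleright\!\!<N$ is $M\otimes N$ with product $(m\blacktriangleright\!\!<n)(m'\blacktriangleright\!\!<n')=m(n_{(-1)}\cdot m')\blacktriangleright\!\!<n_{(0)}n'$.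 *)

(* Tensor products over the field k are not in the library;
   an element of U (x) V is represented by a finite list of pairs (a formal sum
   of pure tensors), and equality in U (x) V is the relation [teq], defined by
   the universal property: two formal sums are equal in U (x) V iff every
   k-bilinear map U x V -> W (W any k-vector space) takes the same value on
   them.  Sweedler notation
   Delta(h) = h_1 (x) h_2  is  "\sum_(p <- D h) ... p.1 ... p.2 ...". *)
From HB Require Import structures.
From mathcomp Require Import all_boot all_order all_algebra.
Set Implicit Arguments. Unset Strict Implicit. Unset Printing Implicit Defensive.
Import GRing.Theory.
Local Open Scope ring_scope.

Section TensorDefs.
Variable k : fieldType.

Definition bilin2 (U V W : lmodType k) (f : U -> V -> W) : Prop :=
  (forall v (c : k) x y, f (c *: x + y) v = c *: f x v + f y v) /\
  (forall u (c : k) x y, f u (c *: x + y) = c *: f u x + f u y).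

Definition bilin3 (U V X W : lmodType k) (f : U -> V -> X -> W) : Prop :=
  (forall v z (c : k) x y, f (c *: x + y) v z = c *: f x v z + f y v z) /\
  (forall u z (c : k) x y, f u (c *: x + y) z = c *: f u x z + f u y z) /\
  (forall u v (c : k) x y, f u v (c *: x + y) = c *: f u v x + f u v y).

Definition teq (U V : lmodType k) (s t : seq (U * V)) : Prop :=
  forall (W : lmodType k) (f : U -> V -> W), bilin2 f ->
    \sum_(p <- s) f p.1 p.2 = \sum_(p <- t) f p.1 p.2.

Definition teq3 (U V X : lmodType k) (s t : seq (U * V * X)) : Prop :=
  forall (W : lmodType k) (f : U -> V -> X -> W), bilin3 f ->
    \sum_(p <- s) f p.1.1 p.1.2 p.2 = \sum_(p <- t) f p.1.1 p.1.2 p.2.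

Definition tscale (U V : lmodType k) (c : k) (s : seq (U * V)) : seq (U * V) :=
  [seq (c *: p.1, p.2) | p <- s].

Definition tmul (R S : algType k) (s t : seq (R * S)) : seq (R * S) :=
  [seq (p.1 * q.1, p.2 * q.2) | p <- s, q <- t].

Definition subalg (A : algType k) (S : A -> Prop) : Prop :=
  [/\ S 1,
      (forall (c : k) x y, S x -> S y -> S (c *: x + y)) &
      (forall x y, S x -> S y -> S (x * y))].

Definition is_bialgebra (H : algType k) (D : H -> seq (H * H)) (e : H -> k)
  : Prop :=
  [/\ (forall (c : k) x y, teq (D (c *: x + y)) (tscale c (D x) ++ D y)),
      (forall (c : k) x y, e (c *: x + y) = c * e x + e y),
      (forall h, teq3 [seq (q.1, q.2, p.2) | p <- D h, q <- D p.1]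
                      [seq (p.1, q.1, q.2) | p <- D h, q <- D p.2]),
      (forall h, \sum_(p <- D h) e p.1 *: p.2 = h /\
                 \sum_(p <- D h) e p.2 *: p.1 = h) &
      [/\ (forall x y, teq (D (x * y)) (tmul (D x) (D y))),
          teq (D 1) [:: (1, 1)],
          (forall x y, e (x * y) = e x * e y) &
          e 1 = 1]].

Definition module_algebra_on (H A : algType k) (D : H -> seq (H * H))
  (e : H -> k) (S : A -> Prop) (pi : H -> A -> A) : Prop :=
  [/\ subalg S,
      (forall h a, S a -> S (pi h a)),
      (forall h (c : k) x y, S x -> S y ->
          pi h (c *: x + y) = c *: pi h x + pi h y),
      (forall (c : k) g h x, S x -> pi (c *: g + h) x = c *: pi g x + pi h x) &
      [/\ (forall x, S x -> pi 1 x = x),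
          (forall g h x, S x -> pi (g * h) x = pi g (pi h x)),
          (forall h x y, S x -> S y ->
              pi h (x * y) = \sum_(p <- D h) pi p.1 x * pi p.2 y) &
          (forall h, pi h 1 = e h *: 1)]].

Definition comodule_algebra_on (H A : algType k) (D : H -> seq (H * H))
  (e : H -> k) (S : A -> Prop) (psi : A -> seq (H * A)) : Prop :=
  [/\ subalg S,
      (forall a, S a -> exists t : seq (H * A),
          teq (psi a) t /\ (forall p, p \in t -> S p.2)),
      (forall (c : k) x y, S x -> S y ->
          teq (psi (c *: x + y)) (tscale c (psi x) ++ psi y)),
      (forall a, S a ->
          teq3 [seq (q.1, q.2, p.2) | p <- psi a, q <- D p.1]
               [seq (p.1, q.1, q.2) | p <- psi a, q <- psi p.2]) &
      [/\ (forall a, S a -> \sum_(p <- psi a) e p.1 *: p.2 = a),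
          (forall x y, S x -> S y -> teq (psi (x * y)) (tmul (psi x) (psi y))) &
          teq (psi 1) [:: (1, 1)]]].

Definition left_twisting_datum (H A : algType k) (D : H -> seq (H * H))
  (e : H -> k) (pi : H -> A -> A) (psi : A -> seq (H * A)) : Prop :=
  [/\ is_bialgebra D e,
      module_algebra_on D e (fun _ => True) pi,
      comodule_algebra_on D e (fun _ => True) psi &
      (forall h a, teq (psi (pi h a)) [seq (p.1, pi h p.2) | p <- psi a])].

Definition invariants (H A : algType k) (e : H -> k) (pi : H -> A -> A)
  (a : A) : Prop := forall h, pi h a = e h *: a.

Definition coinvariants (H A : algType k) (psi : A -> seq (H * A))
  (a : A) : Prop := teq (psi a) [:: (1, a)].

(* left twisted product a * b = a_(0) (a_(-1) . b) *)
Definition twisted_mul (H A : algType k) (pi : H -> A -> A)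
  (psi : A -> seq (H * A)) (a b : A) : A :=
  \sum_(q <- psi a) q.2 * pi q.1 b.

(* product of the generalized smash product M >< N, extended bilinearly:
   (m >< n)(m' >< n') = m (n_(-1) . m') >< n_(0) n' *)
Definition smash_mul (H A : algType k) (pi : H -> A -> A)
  (psi : A -> seq (H * A)) (x y : seq (A * A)) : seq (A * A) :=
  [seq (pq.1.1 * pi r.1 pq.2.1, r.2 * pq.2.2)
     | pq <- [seq (p, q) | p <- x, q <- y], r <- psi pq.1.2].

Definition mulmap (A : algType k) (t : seq (A * A)) : A :=
  \sum_(p <- t) p.1 * p.2.

End TensorDefs.

(* The compatibility psi (h . a) = a_(-1) (x) h . a_(0) shows that each
   h . preserves A^{co(H)}, and that for a in A^H the tensor psi a is killed by
   id (x) (h . - e(h)) for every h.  The common kernel of maps id (x) T_i is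
   H (x) (common kernel of the T_i): make the first tensor factors linearly
   independent, then separate each of them from the others by a linear
   functional (which exists by Zorn's lemma).  Hence psi maps A^H into
   H (x) A^H.  Finally, for a, a' coinvariant and b, b' invariant,
     (a b) * (a' b') = a b_(0) (b_(-1) . a') b' = a (b_(-1) . a') b_(0) b',
   since b_(0) may be taken in A^H and b_(-1) . a' lies in A^{co(H)}. *)

From HB Require Import structures.
From mathcomp Require Import all_boot all_order all_algebra.
From mathcomp Require Import boolp classical_sets.
Set Implicit Arguments. Unset Strict Implicit. Unset Printing Implicit Defensive.
Import GRing.Theory.
Local Open Scope ring_scope.

Section LinearFunctions.
Variables (k : fieldType) (U : lmodType k) (V : zmodType) (s : GRing.Scale.law k V).
Variables (f : U -> V) (f_lin : linear_for s f).

Let fL : {linear U -> V | s} := HB.pack f (GRing.isLinear.Build _ _ _ _ f f_lin).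

Lemma lin0 : f 0 = 0. Proof. exact: (linear0 fL). Qed.
Lemma linD x y : f (x + y) = f x + f y. Proof. exact: (linearD fL). Qed.
Lemma linB x y : f (x - y) = f x - f y. Proof. exact: (linearB fL). Qed.
Lemma linZ c x : f (c *: x) = s c (f x). Proof. exact: (linearZ_LR fL). Qed.
Lemma lin_sum I (r : seq I) (F : I -> U) :
  f (\sum_(i <- r) F i) = \sum_(i <- r) f (F i).
Proof. exact: (linear_sum fL). Qed.

End LinearFunctions.

Section Bilinear.
Variables (k : fieldType) (U V W : lmodType k) (f : U -> V -> W).
Hypothesis f_bilin : bilin2 f.

Lemma bilin0l v : f 0 v = 0. Proof. exact: (lin0 (f_bilin.1 v)). Qed.
Lemma bilin0r u : f u 0 = 0. Proof. exact: (lin0 (f_bilin.2 u)). Qed.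
Lemma bilinDr u x y : f u (x + y) = f u x + f u y. Proof. exact: (linD (f_bilin.2 u)). Qed.
Lemma bilinBl x y v : f (x - y) v = f x v - f y v. Proof. exact: (linB (f_bilin.1 v)). Qed.
Lemma bilinBr u x y : f u (x - y) = f u x - f u y. Proof. exact: (linB (f_bilin.2 u)). Qed.
Lemma bilinZl c x v : f (c *: x) v = c *: f x v. Proof. exact: (linZ (f_bilin.1 v)). Qed.
Lemma bilinZr c u x : f u (c *: x) = c *: f u x. Proof. exact: (linZ (f_bilin.2 u)). Qed.

Lemma bilin_compr (X : lmodType k) (g : X -> V) :
  linear g -> bilin2 (fun u x => f u (g x)).
Proof. by move=> g_lin; split=> *; rewrite ?g_lin (f_bilin.1, f_bilin.2). Qed.

Lemma big_tscale c (s : seq (U * V)) :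
  \sum_(p <- tscale c s) f p.1 p.2 = c *: \sum_(p <- s) f p.1 p.2.
Proof. by rewrite big_map scaler_sumr; apply: eq_bigr => p _; exact: bilinZl. Qed.

End Bilinear.

Lemma teq_sum (k : fieldType) (U V W : lmodType k) (s t : seq (U * V))
  (f : U -> V -> W) :
  teq s t -> bilin2 f -> \sum_(p <- s) f p.1 p.2 = \sum_(p <- t) f p.1 p.2.
Proof. by move=> st f_bilin; exact: st. Qed.

Lemma teq_tmul_1l (k : fieldType) (R S : algType k) (s t : seq (R * S)) x :
  teq s [:: (1, x)] -> teq (tmul s t) [seq (q.1, x * q.2) | q <- t].
Proof.
move=> s1x W f f_bilin; rewrite big_allpairs_dep big_map /=.
have g_bilin : bilin2 (fun u v => \sum_(q <- t) f (u * q.1) (v * q.2)).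
  split=> *; rewrite scaler_sumr -big_split; apply: eq_bigr => q _ /=;
  by rewrite mulrDl -scalerAl (f_bilin.1, f_bilin.2).
by rewrite (teq_sum s1x g_bilin) big_seq1; apply: eq_bigr => q _; rewrite mul1r.
Qed.

Section SeparatingFunctional.
Local Open Scope classical_set_scope.
Variables (k : fieldType) (V : lmodType k).

Definition subspace (S : set V) :=
  S 0 /\ forall c x y, S x -> S y -> S (c *: x + y).

Lemma subspaceN (S : set V) x : subspace S -> S x -> S (- x).
Proof. by case=> S0 Slin Sx; rewrite -[- x]addr0 -scaleN1r; apply: Slin. Qed.

Lemma subspaceB (S : set V) x y : subspace S -> S x -> S y -> S (x - y).
Proof.
by move=> Ssub Sx Sy; rewrite -[x]scale1r; apply: Ssub.2 => //; apply: subspaceN.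
Qed.

Variables (S : set V) (h : V).
Hypotheses (S_subspace : subspace S) (S_h : ~ S h).

(* Zorn's lemma is applied to the sets X such that X `|` S is a subspace
   avoiding h, so that the union of the empty chain is admissible. *)
Let avoiding (X : set V) := subspace (X `|` S) /\ ~ (X `|` S) h.

Lemma exists_maximal_avoiding :
  exists M, [/\ subspace M, S `<=` M, ~ M h &
    forall M', subspace M' -> M `<=` M' -> ~ M' h -> M' `<=` M].
Proof.
have [X [[XS_sub XS_h] maxX]] : exists X, avoiding X /\ forall Y, X `<` Y -> ~ avoiding Y.
  apply: Zorn_bigcup => F Favoid Ftot.
  set U := \bigcup_(X in F) X.
  have common u v : (U `|` S) u -> (U `|` S) v ->
      exists2 Y, avoiding Y & [/\ Y `|` S `<=` U `|` S, (Y `|` S) u & (Y `|` S) v].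
    have sub X : F X -> X `|` S `<=` U `|` S by move=> FX p [Xp|Sp]; [left; exists X|right].
    move=> [[X FX Xu]|Su] [[Y FY Yv]|Sv].
    - have [XY|YX] := Ftot _ _ FX FY.
        by exists Y; [exact: Favoid|split; [exact: sub|left; exact: XY|left]].
      by exists X; [exact: Favoid|split; [exact: sub|left|left; exact: YX]].
    - by exists X; [exact: Favoid|split; [exact: sub|left|right]].
    - by exists Y; [exact: Favoid|split; [exact: sub|right|left]].
    - exists set0; last by split; [rewrite set0U; right|right|right].
      by rewrite /avoiding set0U.
  split; [split|].
  - by right; case: S_subspace.
  - move=> c x y Ux Uy; have [Y [[_ Ylin] _] [YU Yx Yy]] := common _ _ Ux Uy.
    exact/YU/Ylin.
  - by move=> Uh; have [Y [_ Yh] [_ Yh' _]] := common _ _ Uh Uh.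
exists (X `|` S); split => //.
move=> M' M'_sub XSM' M'_h x M'x; apply: contrapT => XSx.
have M'S : M' `|` S = M' by apply/setUidPl => y Sy; apply: XSM'; right.
apply: (maxX M'); last by rewrite /avoiding M'S.
split; first by move=> y Xy; apply: XSM'; left.
by move=> M'X; apply: XSx; left; apply: M'X.
Qed.

Lemma exists_hyperplane_avoiding :
  exists M, [/\ subspace M, S `<=` M, ~ M h & forall x, exists c, M (x - c *: h)].
Proof.
have [M [M_sub SM M_h maxM]] := exists_maximal_avoiding.
exists M; split => // x; apply: contrapT => /forallNP Mx.
pose M' y := exists c, M (y - c *: x).
have MM' : M `<=` M' by move=> y My; exists 0; rewrite scale0r subr0.
have M'_sub : subspace M'.
  split; first exact/MM'/M_sub.1.
  move=> a y z [b My] [c Mz]; exists (a * b + c).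
  have -> : a *: y + z - (a * b + c) *: x = a *: (y - b *: x) + (z - c *: x).
    by rewrite scalerDl -scalerA scalerBr opprD addrACA.
  exact: M_sub.2.
have M'_h : ~ M' h.
  case=> c Mhx; have [c0|c_neq0] := eqVneq c 0.
    by apply: M_h; move: Mhx; rewrite c0 scale0r subr0.
  apply: (Mx c^-1).
  have -> : x - c^-1 *: h = - c^-1 *: (h - c *: x) + 0.
    by rewrite addr0 scalerBr scalerA mulNr mulVf // scaleN1r opprK scaleNr addrC.
  exact: M_sub.2 Mhx M_sub.1.
apply: (Mx 0); rewrite scale0r subr0; apply: maxM M'_sub MM' M'_h _ _.
by exists 1; rewrite scale1r subrr; exact: M_sub.1.
Qed.

Lemma exists_separating_functional :
  exists phi : V -> k, [/\ scalar phi, phi h = 1 & forall s, S s -> phi s = 0].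
Proof.
have [M [M_sub SM M_h Mdec]] := exists_hyperplane_avoiding.
have coord_uniq x c c' : M (x - c *: h) -> M (x - c' *: h) -> c = c'.
  move=> Mc Mc'; apply: contrapT => /eqP; rewrite -subr_eq0 => cc'.
  have Mh : M ((c - c') *: h).
    have -> : (c - c') *: h = (x - c' *: h) - (x - c *: h).
      by rewrite scalerBl [RHS]addrC opprB addrA subrK.
    exact: subspaceB.
  by apply: M_h; rewrite -[h](scalerK cc') -[_ *: _]addr0; exact: M_sub.2 Mh M_sub.1.
have [phi Mphi] := choice Mdec.
exists phi; split.
- move=> a x y; apply: (coord_uniq (a *: x + y)) (Mphi _) _.
  have -> : a *: x + y - (a * phi x + phi y) *: h
          = a *: (x - phi x *: h) + (y - phi y *: h).
    by rewrite scalerDl -scalerA scalerBr opprD addrACA.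
  exact: M_sub.2.
- by apply: (coord_uniq h) (Mphi h) _; rewrite scale1r subrr; exact: M_sub.1.
- by move=> s Ss; apply: (coord_uniq s) (Mphi s) _; rewrite scale0r subr0; exact: SM.
Qed.

End SeparatingFunctional.

Section TensorKernel.
Variables (k : fieldType) (H A : lmodType k).

Fixpoint in_span (l : seq H) (x : H) : Prop :=
  if l is y :: l' then exists c, in_span l' (x - c *: y) else x = 0.

Lemma in_span_subspace l : subspace (in_span l).
Proof.
elim: l => [|y l [IH0 IHlin]] /=; first by split=> // c x y -> ->; rewrite scaler0 addr0.
split; first by exists 0; rewrite scale0r subr0.
move=> c x z [a la] [b lb]; exists (c * a + b).
have := IHlin c _ _ la lb; congr in_span.
by rewrite scalerBr scalerDl scalerA opprD addrACA.
Qed.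

Lemma in_span_mem l x : x \in l -> in_span l x.
Proof.
elim: l => [|y l IH] //=; rewrite in_cons => /orP[/eqP ->|xl].
  by exists 1; rewrite scale1r subrr; case: (in_span_subspace l).
by exists 0; rewrite scale0r subr0; apply: IH.
Qed.

Lemma teq_cons_in_span (s : seq (H * A)) h a : in_span (map fst s) h ->
  exists2 s', size s' = size s & teq ((h, a) :: s) s'.
Proof.
elim: s h => [|[y b] s IH] h /= => [-> | [c hc]].
  by exists [::] => // W f f_bilin; rewrite big_seq1 big_nil /= bilin0l.
have [s' size_s' s_s'] := IH _ hc.
exists ((y, b + c *: a) :: s') => [|W f f_bilin]; first by rewrite /= size_s'.
rewrite !big_cons /= -(teq_sum s_s' f_bilin) big_cons /=.
rewrite (bilinBl f_bilin) (bilinZl f_bilin) (bilinDr f_bilin) (bilinZr f_bilin).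
by rewrite [_ - _ + _]addrAC addrACA subrr addr0 addrCA.
Qed.

Lemma teq_kernel (I : Type) (T : I -> A -> A) (s : seq (H * A)) :
  (forall i, linear (T i)) ->
  (forall i (W : lmodType k) (f : H -> A -> W), bilin2 f ->
      \sum_(p <- s) f p.1 (T i p.2) = 0) ->
  exists2 t, teq s t & forall p, p \in t -> forall i, T i p.2 = 0.
Proof.
(* Induction on s = (h, a) :: s': either h is in the span of the first
   components of s' and can be absorbed into them, or a functional equal to 1
   at h and vanishing on them shows T i a = 0. *)
move=> T_lin; have [n] := ubnP (size s); elim: n s => // n IH [|[h a] s] /= size_s Ts0.
  by exists [::].
have [hs|hs] := pselect (in_span (map fst s) h).
  have [s' size_s' s_s'] := teq_cons_in_span a hs.
  have [||t s't Tt] := IH s'.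
  - by rewrite size_s'.
  - by move=> i W f f_bilin; rewrite -(teq_sum s_s' (bilin_compr f_bilin (T_lin i))) Ts0.
  - by exists t => // W f f_bilin; rewrite (teq_sum s_s' f_bilin) (teq_sum s't f_bilin).
have [phi [phi_lin phih phis]] := exists_separating_functional (in_span_subspace _) hs.
have phi_bilin : bilin2 (fun u (x : A) => phi u *: x).
  by split=> * /=; rewrite ?phi_lin (scalerDl, scalerDr) !scalerA // mulrC.
have Ta i : T i a = 0.
  have := Ts0 i _ _ phi_bilin; rewrite big_cons /= phih scale1r.
  rewrite big_seq big1 ?addr0 // => p ps.
  by rewrite phis ?scale0r //; apply/in_span_mem/map_f.
have [||t st Tt] := IH s => //.
  by move=> i W f f_bilin; have := Ts0 i W f f_bilin; rewrite big_cons /= Ta bilin0r ?add0r.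
exists ((h, a) :: t) => [W f f_bilin|p]; first by rewrite !big_cons (teq_sum st f_bilin).
by rewrite in_cons => /orP[/eqP -> //|]; exact: Tt.
Qed.

End TensorKernel.

Section Restriction.
Variables (k : fieldType) (H A : algType k) (D : H -> seq (H * H)) (e : H -> k).
Variable S : A -> Prop.

Lemma module_algebra_on_restrict (pi : H -> A -> A) :
  module_algebra_on D e (fun _ => True) pi -> subalg S ->
  (forall h a, S a -> S (pi h a)) ->
  module_algebra_on D e S pi.
Proof.
move=> [_ _ pi_linr pi_linl [pi1 pi_comp pi_mul pi_unit]] S_subalg S_pi.
split=> //; last split=> //; move=> *;
  by [apply: pi_linr|apply: pi_linl|apply: pi1|apply: pi_comp|apply: pi_mul].
Qed.

Lemma comodule_algebra_on_restrict (psi : A -> seq (H * A)) :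
  comodule_algebra_on D e (fun _ => True) psi -> subalg S ->
  (forall a, S a -> exists t, teq (psi a) t /\ forall p, p \in t -> S p.2) ->
  comodule_algebra_on D e S psi.
Proof.
move=> [_ _ psi_lin psi_coass [psi_counit psi_mul psi_unit]] S_subalg S_psi.
split=> //; last split=> //; move=> *;
  by [apply: psi_lin|apply: psi_coass|apply: psi_counit|apply: psi_mul].
Qed.

End Restriction.

Section TwistingDatum.
Variables (k : fieldType) (H A : algType k) (D : H -> seq (H * H)) (e : H -> k).
Variables (pi : H -> A -> A) (psi : A -> seq (H * A)).

Hypothesis e_scalar : scalar e.
Hypothesis counitr : forall h, \sum_(p <- D h) e p.2 *: p.1 = h.
Hypothesis pi_linear : forall h, linear (pi h).
Hypothesis pi_linearl : forall a, linear (pi^~ a).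
Hypothesis pi_mul : forall h x y, pi h (x * y) = \sum_(p <- D h) pi p.1 x * pi p.2 y.
Hypothesis pi_unit : forall h, pi h 1 = e h *: 1.
Hypothesis psi_linear :
  forall c x y, teq (psi (c *: x + y)) (tscale c (psi x) ++ psi y).
Hypothesis psi_mul : forall x y, teq (psi (x * y)) (tmul (psi x) (psi y)).
Hypothesis psi_unit : teq (psi 1) [:: (1, 1)].
Hypothesis psi_pi : forall h a, teq (psi (pi h a)) [seq (p.1, pi h p.2) | p <- psi a].

Lemma counit_mul h : \sum_(p <- D h) e p.1 * e p.2 = e h.
Proof.
rewrite -[in RHS](counitr h) (lin_sum e_scalar); apply: eq_bigr => p _.
by rewrite (linZ e_scalar) mulrC.
Qed.

Lemma invariants_subalg : subalg (invariants e pi).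
Proof.
split=> [h|c x y Ix Iy h|x y Ix Iy h]; first by rewrite pi_unit.
  by rewrite pi_linear Ix Iy scalerDr !scalerA mulrC.
rewrite pi_mul -counit_mul scaler_suml; apply: eq_bigr => p _.
by rewrite Ix Iy -scalerAl -scalerAr scalerA.
Qed.

Lemma pi_mulr_invariant h x b : invariants e pi b -> pi h (x * b) = pi h x * b.
Proof.
move=> Ib; rewrite pi_mul -[in RHS](counitr h) (lin_sum (pi_linearl x)) mulr_suml.
by apply: eq_bigr => p _; rewrite Ib (linZ (pi_linearl x)) -scalerAr -scalerAl.
Qed.

Lemma big_psi_linear (W : lmodType k) (f : H -> A -> W) :
  bilin2 f -> linear (fun x => \sum_(p <- psi x) f p.1 p.2).
Proof.
move=> f_bilin c x y.
by rewrite (teq_sum (psi_linear c x y) f_bilin) big_cat (big_tscale f_bilin).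
Qed.

Lemma psi_mul_coinvariant a b : coinvariants psi a ->
  teq (psi (a * b)) [seq (q.1, a * q.2) | q <- psi b].
Proof.
move=> Ca W f f_bilin.
by rewrite (teq_sum (psi_mul a b) f_bilin) (teq_sum (teq_tmul_1l _ Ca) f_bilin).
Qed.

Lemma coinvariants_subalg : subalg (coinvariants psi).
Proof.
split=> [|c x y Cx Cy|x y Cx Cy] W f f_bilin; first exact: psi_unit.
  rewrite (teq_sum (psi_linear c x y) f_bilin) big_cat (big_tscale f_bilin).
  by rewrite (teq_sum Cx f_bilin) (teq_sum Cy f_bilin) !big_seq1 /= (f_bilin.2).
have mulx_lin : linear (fun v : A => x * v) by move=> c u v; rewrite mulrDr scalerAr.
rewrite (teq_sum (psi_mul_coinvariant y Cx) f_bilin) big_map.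
by rewrite (teq_sum Cy (bilin_compr f_bilin mulx_lin)) !big_seq1.
Qed.

Lemma coinvariants_pi h a : coinvariants psi a -> coinvariants psi (pi h a).
Proof.
move=> Ca W f f_bilin; rewrite (teq_sum (psi_pi h a) f_bilin) big_map.
by rewrite (teq_sum Ca (bilin_compr f_bilin (pi_linear h))) !big_seq1.
Qed.

Lemma invariants_coaction a : invariants e pi a ->
  exists t, teq (psi a) t /\ forall p, p \in t -> invariants e pi p.2.
Proof.
move=> Ia; pose T h b := pi h b - e h *: b.
have T_lin h : linear (T h).
  by move=> c x y; rewrite /T pi_linear scalerBr !scalerDr !scalerA mulrC opprD addrACA.
have [|t psi_t Tt] := teq_kernel T_lin (s := psi a).
  move=> h W f f_bilin; rewrite /T.
  under eq_bigr do rewrite (bilinBr f_bilin) (bilinZr f_bilin).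
  rewrite sumrB -scaler_sumr.
  have := teq_sum (psi_pi h a) f_bilin; rewrite big_map /= => <-.
  by rewrite Ia (linZ (big_psi_linear f_bilin)) subrr.
by exists t; split => // p pt h; apply/eqP; rewrite -subr_eq0; apply/eqP; exact: Tt.
Qed.

Lemma twisted_mul_bilin b : bilin2 (fun u v => v * pi u b).
Proof. by split=> *; rewrite ?pi_linearl (mulrDr, mulrDl) -?scalerAr -?scalerAl. Qed.

Lemma twisted_mul_suml I (r : seq I) (F : I -> A) b :
  twisted_mul pi psi (\sum_(i <- r) F i) b = \sum_(i <- r) twisted_mul pi psi (F i) b.
Proof. exact: (lin_sum (big_psi_linear (twisted_mul_bilin b))). Qed.

Lemma twisted_mul_sumr a I (r : seq I) (F : I -> A) :
  twisted_mul pi psi a (\sum_(i <- r) F i) = \sum_(i <- r) twisted_mul pi psi a (F i).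
Proof.
rewrite /twisted_mul exchange_big; apply: eq_bigr => q _.
by rewrite (lin_sum (pi_linear _)) mulr_sumr.
Qed.

Lemma twisted_mul_coinvariantl a b c : coinvariants psi a ->
  twisted_mul pi psi (a * b) c = a * twisted_mul pi psi b c.
Proof.
move=> Ca; rewrite /twisted_mul.
rewrite (teq_sum (psi_mul_coinvariant b Ca) (twisted_mul_bilin c)) big_map.
by rewrite mulr_sumr; apply: eq_bigr => q _; rewrite mulrA.
Qed.

Section Commuting.
Hypothesis coinvariants_invariants_commute :
  forall a b, coinvariants psi a -> invariants e pi b -> a * b = b * a.

Lemma twisted_mul_invariantl b a' b' :
  invariants e pi b -> coinvariants psi a' -> invariants e pi b' ->
  twisted_mul pi psi b (a' * b') = \sum_(r <- psi b) pi r.1 a' * (r.2 * b').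
Proof.
move=> Ib Ca' Ib'; have [t [psi_t It]] := invariants_coaction Ib.
have g_bilin : bilin2 (fun u v => pi u a' * (v * b')).
  by split=> *; rewrite ?pi_linearl !(mulrDl, mulrDr) -?scalerAl -?scalerAr -?scalerAl.
rewrite /twisted_mul (teq_sum psi_t (twisted_mul_bilin _)) (teq_sum psi_t g_bilin).
apply: eq_big_seq => r rt; rewrite pi_mulr_invariant // !mulrA.
by rewrite (coinvariants_invariants_commute (coinvariants_pi _ Ca') (It r rt)).
Qed.

Lemma mulmap_smash_mul x y :
  (forall p, p \in x -> coinvariants psi p.1 /\ invariants e pi p.2) ->
  (forall p, p \in y -> coinvariants psi p.1 /\ invariants e pi p.2) ->
  mulmap (smash_mul pi psi x y) = twisted_mul pi psi (mulmap x) (mulmap y).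
Proof.
move=> xC yC; rewrite /mulmap /smash_mul !big_allpairs_dep /= twisted_mul_suml.
apply: eq_big_seq => p /xC [Cp Ip]; rewrite twisted_mul_sumr.
apply: eq_big_seq => q /yC [Cq Iq].
rewrite twisted_mul_coinvariantl // twisted_mul_invariantl // mulr_sumr.
by apply: eq_bigr => r _; rewrite [RHS]mulrA.
Qed.

End Commuting.

End TwistingDatum.

Theorem proposition4p9 (k : fieldType) (H A : algType k)
  (D : H -> seq (H * H)) (e : H -> k)
  (pi : H -> A -> A) (psi : A -> seq (H * A)) :
  left_twisting_datum D e pi psi ->
  comodule_algebra_on D e (invariants e pi) psi /\
  module_algebra_on D e (coinvariants psi) pi /\
  ((forall a b, coinvariants psi a -> invariants e pi b -> a * b = b * a) ->
    mulmap [:: ((1 : A), (1 : A))] = 1 /\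
    (forall x y : seq (A * A),
       (forall p, p \in x -> coinvariants psi p.1 /\ invariants e pi p.2) ->
       (forall p, p \in y -> coinvariants psi p.1 /\ invariants e pi p.2) ->
       mulmap (smash_mul pi psi x y)
       = twisted_mul pi psi (mulmap x) (mulmap y))).
Proof.
move=> [[_ e_scalar _ counit _] pi_mod psi_comod psi_pi].
have [_ _ pi_linT pi_linlT [_ _ pi_mulT pi_unit]] := pi_mod.
have [_ _ psi_linT _ [_ psi_mulT psi_unit]] := psi_comod.
have counitr h := (counit h).2.
have pi_lin h : linear (pi h) by move=> c x y; exact: pi_linT.
have pi_linl a : linear (pi^~ a) by move=> c x y; exact: pi_linlT.
have pi_mul h x y := pi_mulT h x y I I.
have psi_lin c x y := psi_linT c x y I I.
have psi_mul x y := psi_mulT x y I I.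
split; last split.
- apply: comodule_algebra_on_restrict psi_comod _ _.
    exact: invariants_subalg e_scalar counitr pi_lin pi_mul pi_unit.
  exact: invariants_coaction pi_lin psi_lin psi_pi.
- apply: module_algebra_on_restrict pi_mod _ _.
    exact: coinvariants_subalg psi_lin psi_mul psi_unit.
  exact: coinvariants_pi pi_lin psi_pi.
- move=> commute; split; first by rewrite /mulmap big_seq1 mulr1.
  exact: mulmap_smash_mul counitr pi_lin pi_linl pi_mul psi_lin psi_mul psi_pi commute.
Qed.
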